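(* Let $n$ be a positive integer and $v$ an odd positive integer, let $q=v^{1/n}$, and assume $q\ge 3$. Put $m=\left\lfloor\frac{q-1}{2}\right\rfloor$. Then there exists a $(K,F,Z,S)$ placement delivery array with $K=F=q^n=v$, $Z=q^n-(2m)^n$, and $S=m^nq^n$; consequently there is a $v$-division $(v,M,N)$ coded caching scheme with memory ratio $\frac{M}{N}=1-\frac{2^nm^n}{q^n}$, subpacketization $v$, and transmission load $R=m^n$.
   Context: A $(K,F,Z,S)$ placement delivery array (PDA) is an $F\times K$ array $\mathbf{P}=(p_{j,k})$ with entries from $\{*\}\cup\{1,\dots,S\}$ such that: (C1) each column contains exactly $Z$ stars; (C2) each integer of $\{1,\dots,S\}$ occurs at least once; (C3) for any two distinct entries $p_{j_1,k_1}=p_{j_2,k_2}=s$ (an integer) we have $j_1\neq j_2$, $k_1\neq k_2$, and $p_{j_1,k_2}=p_{j_2,k_1}=*$. A $(K,M,N)$ coded caching system consists of a server storing $N$ equal-size files and $K$ users each with a cache of size $M$ files, connected by an error-free shared broadcast link. An $F$-division scheme splits each file into $F$ equal-size packets; in the placement phase packets are stored in user caches without knowledge of future demands; in the delivery phase each user requests one file and the server broadcasts coded messages (XORs of packets) so that every user can decode its requested file. The transmission load $R$ is the worst case over all demand vectors of the total broadcast size normalized by the file size; $M/N$ is the memory ratio. *)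

From HB Require Import structures.
From mathcomp Require Import all_boot all_order all_algebra.
From mathcomp Require Import reals.
Set Implicit Arguments.
Unset Strict Implicit.
Unset Printing Implicit Defensive.
Import Order.TTheory GRing.Theory Num.Theory.

(* A (K,F,Z,S) placement delivery array: an F x K array with entries in
   {*} U {1..S}; [None] encodes the star and [Some s] (s : 'I_S) encodes
   the integer s+1. *)
Definition is_PDA (K F Z S : nat) (P : 'M[option 'I_S]_(F, K)) : Prop :=
  (forall k : 'I_K, #|[set j : 'I_F | P j k == None]| = Z) /\
  (forall s : 'I_S, exists (j : 'I_F) (k : 'I_K), P j k = Some s) /\
  (forall (j1 j2 : 'I_F) (k1 k2 : 'I_K) (s : 'I_S),
     (j1, k1) <> (j2, k2) -> P j1 k1 = Some s -> P j2 k2 = Some s ->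
     [/\ j1 <> j2, k1 <> k2, P j1 k2 = None & P j2 k1 = None]).

(* An F-division coded caching scheme for K users and N files.
   A packet is indexed by (file, packet index).  Placement: user k stores
   (uncoded) the set of packets [cache k], chosen independently of demands.
   Delivery: for each demand vector d, the server broadcasts a list of
   messages, each being the XOR of a set of packets (each message has the
   size of one packet). *)
Record caching_scheme (K N F : nat) := CachingScheme {
  cache : 'I_K -> {set 'I_N * 'I_F};
  deliver : {ffun 'I_K -> 'I_N} -> seq {set 'I_N * 'I_F}
}.

(* value of the XOR of the packets in A, for file contents W
   (packet contents modelled bitwise) *)
Definition xor_msg (N F : nat) (W : 'I_N * 'I_F -> bool)
  (A : {set 'I_N * 'I_F}) : bool :=
  \big[addb/false]_(p in A) W p.

(* Decodability: for every demand d, every user k, the cache content and the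
   broadcast messages determine all packets of the requested file d k. *)
Definition decodable (K N F : nat) (sch : caching_scheme K N F) : Prop :=
  forall (d : {ffun 'I_K -> 'I_N}) (k : 'I_K) (W W' : 'I_N * 'I_F -> bool),
    (forall p, p \in cache sch k -> W p = W' p) ->
    (forall A, A \in deliver sch d -> xor_msg W A = xor_msg W' A) ->
    forall j : 'I_F, W (d k, j) = W' (d k, j).

(* The cache of each user holds at most M files, i.e. M*F packets, where
   M = memratio * N. *)
Definition respects_memory_ratio (R : numDomainType) (K N F : nat)
  (sch : caching_scheme K N F) (memratio : R) : Prop :=
  forall k : 'I_K, (#|cache sch k|%:R <= memratio * N%:R * F%:R)%R.

Definition load (R : fieldType) (K N F : nat) (sch : caching_scheme K N F) : R :=
  ((\max_(d : {ffun 'I_K -> 'I_N}) size (deliver sch d))%:R / F%:R)%R.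

From HB Require Import structures.
From mathcomp Require Import all_boot all_order all_algebra reals.
From mathcomp Require Import zify lra.
Import Order.TTheory GRing.Theory Num.Theory.

Set Implicit Arguments.
Unset Strict Implicit.
Unset Printing Implicit Defensive.

(* Index the integer cells of the array by triples (x, e, s), with x in Z_v,
   magnitudes e in [1, m]^n and signs s in {0,1}^n: the cell (x, e, s) lies in
   row x + a and column x + b, where a and b are the numbers whose digits in
   base 2m+1 are e_i [s_i = 0] and e_i [s_i = 1], and it carries the label
   (x, e).  Shifted by M = sum_i m (2m+1)^i, the offset column - row + M of a
   cell has the digits m +- e_i, none equal to m, whereas the offset of the
   crossing position (row of (x, e, s), column of (x, e, t)) has the digit m
   wherever s and t differ.  As (2m+1)^n <= v, an offset mod v determines its
   digits; this yields (C3), and each column meets exactly one cell per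
   (e, s), hence (2m)^n of them.  The coded caching scheme is the one
   attached to any PDA: user k caches packet j of every file iff P j k = *,
   and the integer s is delivered as the XOR of the requested packets at the
   cells labelled s. *)

Section DigitSums.
Variable w : nat.

Definition digsum {k} (g : 'I_k -> nat) : nat := \sum_(i < k) g i * w ^ i.

Lemma digsum_recl k (g : 'I_k.+1 -> nat) :
  digsum g = g ord0 + digsum (fun i => g (lift ord0 i)) * w.
Proof.
rewrite /digsum big_ord_recl expn0 muln1 big_distrl; congr (_ + _).
by apply: eq_bigr => i _; rewrite lift0 expnS mulnCA mulnC.
Qed.

Lemma digsum_lt k (g : 'I_k -> nat) : (forall i, g i < w) -> digsum g < w ^ k.
Proof.
elim: k g => [|k IH] g g_lt; first by rewrite /digsum big_ord0.
rewrite digsum_recl expnS.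
have := IH _ (fun i => g_lt (lift ord0 i)); have := g_lt ord0.
set d := digsum _ => g0_lt d_lt.
have : d.+1 * w <= w ^ k * w by rewrite leq_mul2r d_lt orbT.
lia.
Qed.

Lemma digsum_inj k (g h : 'I_k -> nat) :
  (forall i, g i < w) -> (forall i, h i < w) -> digsum g = digsum h -> g =1 h.
Proof.
elim: k g h => [|k IH] g h g_lt h_lt; first by move=> _ [].
have w_gt0 : 0 < w by apply: leq_ltn_trans (g_lt ord0).
rewrite !digsum_recl => eq_sum.
have eq0 : g ord0 = h ord0.
  have := congr1 (modn^~ w) eq_sum.
  by rewrite !(addnC (_ ord0)) !modnMDl !modn_small.
move: eq_sum; rewrite eq0 => /addnI /(congr1 (divn^~ w)).
rewrite /= !mulnK // => /(IH _ _ (fun i => g_lt _) (fun i => h_lt _)) eq_lift i.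
by case: (unliftP ord0 i) => [j ->|->].
Qed.

End DigitSums.

Lemma inZpD p (a b : nat) : inZp (a + b) = (inZp a + inZp b)%R :> 'I_p.+1.
Proof. by apply: val_inj; rewrite /= modnDm. Qed.

Lemma inZp_inj p (a b : nat) :
  a <= p -> b <= p -> inZp a = inZp b :> 'I_p.+1 -> a = b.
Proof. by move=> a_lt b_lt /(congr1 val); rewrite /= !modn_small. Qed.

Section CellArray.
Variables (T : finType) (F K S : nat).
Variables (row : T -> 'I_F) (col : T -> 'I_K) (lab : T -> 'I_S).
Hypothesis position_inj : forall c1 c2, row c1 = row c2 -> col c1 = col c2 -> c1 = c2.

Definition cell_array : 'M[option 'I_S]_(F, K) :=
  \matrix_(j, k) omap lab [pick c | (row c == j) && (col c == k)].

Lemma cell_arrayE c : cell_array (row c) (col c) = Some (lab c).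
Proof.
rewrite mxE; case: pickP => [c' /andP[/eqP rc /eqP cc]|/(_ c)]; last by rewrite !eqxx.
by rewrite (position_inj rc cc).
Qed.

Lemma cell_array_Some j k l :
  cell_array j k = Some l -> exists c, [/\ row c = j, col c = k & lab c = l].
Proof.
by rewrite mxE; case: pickP => // c /andP[/eqP <- /eqP <-] [<-]; exists c.
Qed.

Lemma card_cell_array_None k d :
  #|[set c | col c == k]| = d -> #|[set j | cell_array j k == None]| = F - d.
Proof.
move=> <-; rewrite cardsCs card_ord; congr (_ - _).
rewrite -(card_in_imset (f := row)); last first.
  move=> c1 c2; rewrite !inE => /eqP col1 /eqP col2 rc.
  by apply: position_inj rc _; rewrite col1 col2.
apply: eq_card => j; rewrite !inE; apply/idP/imsetP.
- case E: (cell_array j k) => [l|] // _.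
  by have [c [<- colc _]] := cell_array_Some E; exists c; rewrite ?inE ?colc.
- by case=> c; rewrite inE => /eqP <- ->; rewrite cell_arrayE.
Qed.

Lemma cell_array_PDA d :
  (forall k, #|[set c | col c == k]| = d) ->
  (forall l, exists c, lab c = l) ->
  (forall c1 c2 c, c1 != c2 -> lab c1 = lab c2 ->
     row c = row c1 -> col c = col c2 -> False) ->
  is_PDA (F - d) cell_array.
Proof.
move=> col_card lab_surj no_cross; split; first by move=> k; exact: card_cell_array_None.
split.
  by move=> l; have [c <-] := lab_surj l; exists (row c), (col c); rewrite cell_arrayE.
move=> j1 j2 k1 k2 l pos_neq /cell_array_Some[c1 [rc1 cc1 <-]].
move=> /cell_array_Some[c2 [rc2 cc2 lab21]]; subst j1 j2 k1 k2.
have c12 : c1 != c2 by apply/eqP => c12; apply: pos_neq; rewrite c12.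
(* Taking c = c2, resp. c = c1, in [no_cross] also separates the rows, resp.
   the columns, of two cells with the same label. *)
have cross_star c c' : c != c' -> lab c = lab c' -> cell_array (row c) (col c') = None.
  move=> cc' lab_eq; case E: (cell_array _ _) => [l'|] //.
  have [c'' [rc cc _]] := cell_array_Some E.
  by case: (no_cross c c' c'' cc' lab_eq rc cc).
have lab12 := esym lab21.
split.
- by move=> r12; have := cross_star c1 c2 c12 lab12; rewrite r12 cell_arrayE.
- by move=> k12; have := cross_star c1 c2 c12 lab12; rewrite -k12 cell_arrayE.
- exact: cross_star.
- by apply: cross_star; rewrite 1?eq_sym.
Qed.

End CellArray.

Section Construction.
Variables (n m p : nat).
Local Notation v := p.+1.
Local Notation w := (2 * m).+1.
Hypothesis digits_fit : w ^ n <= v.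

Definition magnitudes := {ffun 'I_n -> 'I_m}.
Definition signs := {ffun 'I_n -> bool}.
Definition cell := ('I_v * magnitudes * signs)%type.

Implicit Types (e : magnitudes) (s t : signs) (c : cell).

Definition mag e i := (e i).+1.
Definition row_digit e s i := if s i then 0 else mag e i.
Definition col_digit e t i := if t i then mag e i else 0.
Definition offset_digit e s t i := m + col_digit e t i - row_digit e s i.

Definition cell_row c : 'I_v := (c.1.1 + inZp (digsum w (row_digit c.1.2 c.2)))%R.
Definition cell_col c : 'I_v := (c.1.1 + inZp (digsum w (col_digit c.1.2 c.2)))%R.
Definition offset (j k : 'I_v) : 'I_v := (k - j + inZp (digsum w (fun _ : 'I_n => m)))%R.

Lemma mag_bounds e i : 0 < mag e i <= m.
Proof. exact: ltn_ord. Qed.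

Lemma offset_digit_lt e s t i : offset_digit e s t i < w.
Proof.
rewrite /offset_digit /row_digit /col_digit.
by have := mag_bounds e i; case: (s i); case: (t i); lia.
Qed.

Lemma digsum_offset_digit e s t :
  digsum w (col_digit e t) + digsum w (fun _ : 'I_n => m) =
  digsum w (row_digit e s) + digsum w (offset_digit e s t).
Proof.
rewrite /digsum -!big_split; apply: eq_bigr => i _ /=; rewrite -!mulnDl.
rewrite /offset_digit /row_digit /col_digit; congr (_ * _).
by have := mag_bounds e i; case: (s i); case: (t i); lia.
Qed.

Lemma offset_cells x e s t :
  offset (cell_row (x, e, s)) (cell_col (x, e, t)) =
  inZp (digsum w (offset_digit e s t)).
Proof.
rewrite /offset /cell_row /cell_col /= opprD addrACA subrr add0r addrAC.
by rewrite -inZpD (digsum_offset_digit e s t) inZpD addrAC subrr add0r.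
Qed.

Lemma inZp_digsum_inj (g h : 'I_n -> nat) :
  (forall i, g i < w) -> (forall i, h i < w) ->
  inZp (digsum w g) = inZp (digsum w h) :> 'I_v -> g =1 h.
Proof.
have fits (f : 'I_n -> nat) : (forall i, f i < w) -> digsum w f <= p.
  by move=> f_lt; rewrite -ltnS; apply: leq_trans (digsum_lt f_lt) digits_fit.
move=> g_lt h_lt /(inZp_inj (fits _ g_lt) (fits _ h_lt)).
exact: digsum_inj.
Qed.

Lemma offset_digit_diag_inj e e' s s' i :
  offset_digit e s s i = offset_digit e' s' s' i -> s i = s' i /\ e i = e' i.
Proof.
move=> eq_dig; suff: s i = s' i /\ mag e i = mag e' i by case=> ? /succn_inj /val_inj.
move: eq_dig; rewrite /offset_digit /row_digit /col_digit.
by have := mag_bounds e i; have := mag_bounds e' i; case: (s i); case: (s' i); lia.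
Qed.

Lemma offset_digit_diag_neq e s i : offset_digit e s s i != m.
Proof.
rewrite /offset_digit /row_digit /col_digit.
by have := mag_bounds e i; case: (s i); lia.
Qed.

Lemma offset_digit_cross e s t i : s i != t i -> offset_digit e s t i = m.
Proof.
rewrite /offset_digit /row_digit /col_digit.
by have := mag_bounds e i; case: (s i); case: (t i); lia.
Qed.

Lemma cell_position_inj c1 c2 :
  cell_row c1 = cell_row c2 -> cell_col c1 = cell_col c2 -> c1 = c2.
Proof.
case: c1 c2 => [[x1 e1] s1] [[x2 e2] s2] r12 k12.
have := offset_cells x1 e1 s1 s1; rewrite r12 k12 offset_cells.
move/esym/inZp_digsum_inj => /(_ (offset_digit_lt _ _ _) (offset_digit_lt _ _ _)) eq_dig.
have {}eq_dig i := offset_digit_diag_inj (eq_dig i).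
have eq_s : s1 = s2 by apply/ffunP => i; case: (eq_dig i).
have eq_e : e1 = e2 by apply/ffunP => i; case: (eq_dig i).
by subst; move: r12 => /addIr /= ->.
Qed.

Lemma cells_no_cross x e s t c :
  s != t -> cell_row c = cell_row (x, e, s) -> cell_col c = cell_col (x, e, t) -> False.
Proof.
case: c => [[x' e'] r] st rc kc.
have [i st_i] : exists i, s i != t i.
  apply/existsP; rewrite -negb_forall; apply: contra st => /forallP eq_st.
  by apply/eqP/ffunP => i; apply/eqP.
have := offset_cells x' e' r r; rewrite rc kc offset_cells.
move/inZp_digsum_inj => /(_ (offset_digit_lt _ _ _) (offset_digit_lt _ _ _)) eq_dig.
by have := offset_digit_diag_neq e' r i; rewrite -eq_dig offset_digit_cross ?eqxx.
Qed.

Lemma card_col_cells k : #|[set c | cell_col c == k]| = (2 * m) ^ n.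
Proof.
pose cell_at (es : magnitudes * signs) : cell :=
  ((k - inZp (digsum w (col_digit es.1 es.2)))%R, es.1, es.2).
have -> : [set c | cell_col c == k] = cell_at @: setT.
  apply/setP => -[[x e] s]; rewrite inE.
  apply/eqP/imsetP => [col_k|[[e' s'] _ [-> -> ->]]].
  - by exists (e, s); rewrite // /cell_at -col_k /cell_col /= addrK.
  - by rewrite /cell_col /= subrK.
rewrite card_imset; last by move=> [e1 s1] [e2 s2] [_ -> ->].
by rewrite cardsT card_prod !card_ffun !card_ord card_bool expnMn mulnC.
Qed.

Lemma card_labels : #|{: 'I_v * magnitudes}| = m ^ n * v.
Proof. by rewrite card_prod card_ffun !card_ord mulnC. Qed.

Definition cell_label c : 'I_(m ^ n * v) := cast_ord card_labels (enum_rank c.1).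

Lemma cell_label_inj c1 c2 : cell_label c1 = cell_label c2 -> c1.1 = c2.1.
Proof. by move=> /(congr1 val) /= /val_inj /enum_rank_inj. Qed.

Lemma cell_label_surj l : exists c, cell_label c = l.
Proof.
exists (enum_val (cast_ord (esym card_labels) l), [ffun=> true]).
by apply: val_inj; rewrite /= enum_valK.
Qed.

Definition cyclic_PDA := cell_array cell_row cell_col cell_label.

Lemma cyclic_PDA_is_PDA : is_PDA (v - (2 * m) ^ n) cyclic_PDA.
Proof.
apply: cell_array_PDA;
  [exact: cell_position_inj | exact: card_col_cells | exact: cell_label_surj |].
move=> [[x1 e1] s1] [[x2 e2] s2] c c12 /cell_label_inj /= [eq_x eq_e].
by subst x2 e2; apply: cells_no_cross; apply: contra c12 => /eqP ->.
Qed.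

End Construction.

Section PDAScheme.
Variables (K F Z S N : nat) (P : 'M[option 'I_S]_(F, K)).
Hypothesis P_PDA : is_PDA Z P.

Definition pda_scheme : caching_scheme K N F := CachingScheme
  (fun k => [set p : 'I_N * 'I_F | P p.2 k == None])
  (fun d => [seq [set p : 'I_N * 'I_F | [exists k, (P p.2 k == Some s) && (d k == p.1)]]
              | s <- enum 'I_S]).

Lemma card_pda_scheme_cache k : #|cache pda_scheme k| = N * Z.
Proof.
have -> : cache pda_scheme k = setX [set: 'I_N] [set j | P j k == None].
  by apply/setP => -[i j]; rewrite !inE.
by rewrite cardsX cardsT card_ord (P_PDA.1 k).
Qed.

Lemma size_pda_scheme_deliver d : size (deliver pda_scheme d) = S.
Proof. by rewrite size_map size_enum_ord. Qed.

Lemma pda_scheme_decodable : decodable pda_scheme.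
Proof.
move=> d k W W' W_cache W_msg j.
(* by (C3), user k caches every other packet of the message for P j k *)
case P_jk: (P j k) => [s|]; last by apply: W_cache; rewrite inE P_jk.
set A := [set p : 'I_N * 'I_F | [exists k', (P p.2 k' == Some s) && (d k' == p.1)]].
have A_sent : A \in deliver pda_scheme d by apply: map_f; rewrite mem_enum.
have jk_A : (d k, j) \in A by rewrite inE; apply/existsP; exists k; rewrite P_jk !eqxx.
have := W_msg A A_sent; rewrite /xor_msg !(bigD1 (d k, j) jk_A) /=.
have -> : \big[addb/false]_(p in A | p != (d k, j)) W p =
          \big[addb/false]_(p in A | p != (d k, j)) W' p.
  apply: eq_bigr => -[i j'] /andP[]; rewrite inE /=.
  move=> /existsP[k' /andP[/eqP P_jk' /eqP d_k']].
  rewrite -d_k' => p_neq; apply: W_cache; rewrite inE /=.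
  have jk_neq : (j, k) <> (j', k') by case=> eq_j eq_k; rewrite eq_j eq_k eqxx in p_neq.
  by have [_ _ _ ->] := P_PDA.2.2 j j' k k' s jk_neq P_jk P_jk'.
exact: addIb.
Qed.

Lemma pda_scheme_memory_ratio (R : numFieldType) :
  0 < F -> respects_memory_ratio pda_scheme (Z%:R / F%:R : R)%R.
Proof.
move=> F_gt0 k; rewrite card_pda_scheme_cache mulrAC divfK ?pnatr_eq0 -?lt0n //.
by rewrite natrM mulrC.
Qed.

Lemma load_pda_scheme (R : fieldType) : 0 < N -> load R pda_scheme = (S%:R / F%:R)%R.
Proof.
move=> N_gt0; rewrite /load; congr (_%:R / _)%R.
under eq_bigr do rewrite size_pda_scheme_deliver.
by rewrite (bigop.bigmax_eq_arg [ffun=> Ordinal N_gt0]).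
Qed.

End PDAScheme.

Lemma floor_half_pred_bound (R : realType) (q : R) :
  (1 <= q)%R -> (((2 * `|Num.floor ((q - 1) / 2)|%N).+1)%:R <= q)%R.
Proof.
move=> q_ge1; set x := ((q - 1) / 2)%R.
have floor_x : (`|Num.floor x|%N%:R <= x)%R.
  by rewrite natr_absz ger0_norm ?floor_ge0 ?floor_le // /x; lra.
by rewrite -addn1 natrD natrM; rewrite /x in floor_x; lra.
Qed.

Local Open Scope ring_scope.

Theorem theorem3 (R : realType) (n v : nat) (q : R) :
  (0 < n)%N -> (0 < v)%N -> odd v ->
  (0 <= q)%R -> (q ^+ n = v%:R)%R -> (3 <= q)%R ->
  let m : nat := `|Num.floor ((q - 1) / 2)|%N in
  (exists P : 'M[option 'I_(m ^ n * v)]_(v, v),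
      @is_PDA v v (v - (2 * m) ^ n) (m ^ n * v) P) /\
  (forall N : nat, (0 < N)%N ->
     exists sch : caching_scheme v N v,
       [/\ decodable sch,
           respects_memory_ratio sch
             (1 - (2 ^ n * m ^ n)%:R / q ^+ n : R)%R
         & load R sch = (m ^ n)%:R]).
Proof.
move=> n_gt0 v_gt0 _ q_ge0 qv q_ge3 m.
have digits_fit : ((2 * m).+1 ^ n <= v)%N.
  rewrite -(ler_nat R) natrX -qv; apply: lerXn2r; rewrite ?nnegrE //.
  by apply: floor_half_pred_bound; lra.
case: v v_gt0 qv digits_fit => // p _ qv digits_fit.
have PDA := cyclic_PDA_is_PDA digits_fit.
split; first by exists (cyclic_PDA n m p).
move=> N N_gt0; exists (pda_scheme N (cyclic_PDA n m p)); split.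
- exact: pda_scheme_decodable PDA.
- have cells_fit : ((2 * m) ^ n <= p.+1)%N.
    by apply: leq_trans digits_fit; rewrite leq_exp2r.
  have -> : 1 - (2 ^ n * m ^ n)%:R / q ^+ n = (p.+1 - (2 * m) ^ n)%:R / p.+1%:R :> R.
    by rewrite -expnMn qv natrB // mulrBl divff ?pnatr_eq0.
  exact (pda_scheme_memory_ratio N PDA R (ltn0Sn p)).
- by rewrite (load_pda_scheme _ R N_gt0) natrM mulfK ?pnatr_eq0.
Qed.
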